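(* Let $X\subset\mathbb{R}^n$ be a finite set of points, let $\mathcal O$ be an order ideal and let $\mathcal B$ be an $\mathcal O$-border basis of the vanishing ideal $\mathcal I(X)$. Then for every $g\in\mathcal B$, $\mathfrak n_{\mathrm g}(g;X)\neq\boldsymbol 0$.
   Context: $\mathcal I(X)=\{g\in\mathbb{R}[x_1,\ldots,x_n]:g(\boldsymbol x)=0\ \forall\boldsymbol x\in X\}$. A term is a monomial $x_1^{a_1}\cdots x_n^{a_n}$. An order ideal $\mathcal O$ is a finite set of terms such that every term dividing an element of $\mathcal O$ belongs to $\mathcal O$. Its border is $\partial\mathcal O=\{x_ko:o\in\mathcal O,k=1,\ldots,n\}\setminus\mathcal O$. An $\mathcal O$-border basis of $\mathcal I(X)$ is a set of polynomials $\mathcal B\subset\mathcal I(X)$ generating $\mathcal I(X)$, each of the form $g=b-\sum_{o\in\mathcal O}c_oo$ with $b\in\partial\mathcal O$ and $c_o\in\mathbb R$, such that the residue classes of the terms of $\mathcal O$ form a basis of $\mathbb{R}[x_1,\ldots,x_n]/\mathcal I(X)$ (equivalently, the evaluation vectors of the terms of $\mathcal O$ at $X$ are linearly independent and span $\mathbb{R}^{|X|}$). $\mathfrak n_{\mathrm g}(g;X)=\mathrm{vec}(\nabla g(X))$, where $\nabla g(X)$ is the $|X|\times n$ matrix whose rows are the gradients of $g$ at the points of $X$. *)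

From HB Require Import structures.
From mathcomp Require Import all_boot all_order all_algebra.
From mathcomp Require Import finmap.
From mathcomp Require Import mpoly.
From mathcomp Require Import reals.
Set Implicit Arguments. Unset Strict Implicit. Unset Printing Implicit Defensive.
Import Order.TTheory GRing.Theory Num.Theory.
Local Open Scope ring_scope.
Local Open Scope fset_scope.

Section BorderBasis.
Variables (R : realType) (n : nat).

Definition evalpt (p : {mpoly R[n]}) (x : 'rV[R]_n) : R :=
  p.@[fun i => x ord0 i].

Definition in_vanishing_ideal (X : seq 'rV[R]_n) (g : {mpoly R[n]}) : Prop :=
  forall x, x \in X -> evalpt g x = 0.

Definition order_ideal (O : {fset 'X_{1..n}}) : Prop :=
  forall m m' : 'X_{1..n}, m \in O -> (forall i, m' i <= m i)%N -> m' \in O.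

Definition in_border (O : {fset 'X_{1..n}}) (b : 'X_{1..n}) : Prop :=
  b \notin O /\ exists2 o, o \in O & exists k : 'I_n, b = (o + U_(k))%MM.

Definition border_basis (X : seq 'rV[R]_n) (O : {fset 'X_{1..n}})
    (B : {fset {mpoly R[n]}}) : Prop :=
  [/\
      forall g, g \in B -> in_vanishing_ideal X g,
      forall f, in_vanishing_ideal X f ->
        exists h : {mpoly R[n]} -> {mpoly R[n]}, f = \sum_(g <- B) h g * g,
      forall g, g \in B -> exists b, exists c : 'X_{1..n} -> R,
        in_border O b /\ g = 'X_[b] - \sum_(o <- O) c o *: 'X_[o],
      forall f, exists c : 'X_{1..n} -> R,
        in_vanishing_ideal X (f - \sum_(o <- O) c o *: 'X_[o])
    &
      forall c : 'X_{1..n} -> R,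
        in_vanishing_ideal X (\sum_(o <- O) c o *: 'X_[o]) ->
        forall o, o \in O -> c o = 0 ].

(* n_g(g;X) = vec(grad g(X)), with grad g(X) the |X| x n matrix whose rows
   are the gradients of g at the points of X (listed in the order of X). *)
Definition grad_mat (g : {mpoly R[n]}) (X : seq 'rV[R]_n) : 'M[R]_(size X, n) :=
  \matrix_(i < size X, k < n) evalpt (mderiv k g) (nth 0 X i).

Definition ngrad (g : {mpoly R[n]}) (X : seq 'rV[R]_n) : 'rV[R]_(size X * n) :=
  mxvec (grad_mat g X).

End BorderBasis.

From HB Require Import structures.
From mathcomp Require Import all_boot all_order all_algebra.
From mathcomp Require Import finmap.
From mathcomp Require Import mpoly.
From mathcomp Require Import reals.
Local Open Scope ring_scope.
Local Open Scope fset_scope.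
Import GRing.Theory Num.Theory.

(* Write g = x^b - sum_(o in O) c_o x^o with b = o0 * x_k, o0 in O.  The
   partial derivative of g in the direction x_k is again supported on O (O is
   closed under division and b is the only border term of g), and its
   coefficient on o0 is (o0_k + 1), which is nonzero.  If the gradient of g
   vanished on X, this derivative would lie in I(X), contradicting the linear
   independence of the residue classes of O. *)

Section MonomialSpan.
Context {R : nzRingType} {n : nat} {O : {fset 'X_{1..n}}}.

Lemma mcoeff_fset_lincomb (c : 'X_{1..n} -> R) (m : 'X_{1..n}) :
  (\sum_(o <- O) c o *: 'X_[o] : {mpoly R[n]})@_m = if m \in O then c m else 0.
Proof.
rewrite raddf_sum /=.
under eq_bigr => o _ do rewrite mcoeffZ mcoeffX.
case: ifP => mO.
- rewrite (bigD1_seq m) ?fset_uniq //= eqxx mulr1 big1 ?addr0 //.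
  by move=> o /negbTE ->; rewrite mulr0.
- rewrite big1_seq // => o /andP[_ oO].
  by case: eqP => [om | _]; [rewrite om mO in oO | rewrite mulr0].
Qed.

Lemma mpoly_fset_span {p : {mpoly R[n]}} :
  (forall m, m \notin O -> p@_m = 0) -> p = \sum_(o <- O) p@_o *: 'X_[o].
Proof.
move=> p_supp; apply/mpolyP => m; rewrite mcoeff_fset_lincomb.
by case: ifPn => // /p_supp.
Qed.

Hypothesis O_order_ideal : order_ideal O.

Lemma order_ideal_mulX_notin (m : 'X_{1..n}) (k : 'I_n) :
  m \notin O -> (m + U_(k))%MM \notin O.
Proof.
apply: contra => /O_order_ideal; apply=> i.
by rewrite mnmDE leq_addr.
Qed.

Context {o : 'X_{1..n}} {k : 'I_n} {c : 'X_{1..n} -> R}.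
Hypothesis oO : o \in O.
Let g : {mpoly R[n]} := 'X_[o + U_(k)] - \sum_(o' <- O) c o' *: 'X_[o'].

Lemma mcoeff_mderiv_border_notin (m : 'X_{1..n}) :
  m \notin O -> (mderiv k g)@_m = 0.
Proof.
move=> mO; rewrite mcoeff_deriv mcoeffB mcoeffX mcoeff_fset_lincomb.
rewrite (negbTE (order_ideal_mulX_notin _ k mO)) subr0.
by case: eqP => [/addIm om | _]; [rewrite -om oO in mO | rewrite mul0rn].
Qed.

Lemma mcoeff_mderiv_border :
  (o + U_(k))%MM \notin O -> (mderiv k g)@_o = (o k).+1%:R.
Proof.
move=> bO; rewrite mcoeff_deriv mcoeffB mcoeffX mcoeff_fset_lincomb.
by rewrite eqxx (negbTE bO) subr0.
Qed.

End MonomialSpan.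

Lemma ngrad_eq0_mderiv_vanishing (R : realType) (n : nat)
    (X : seq 'rV[R]_n) (g : {mpoly R[n]}) :
  ngrad g X = 0 -> forall k, in_vanishing_ideal X (mderiv k g).
Proof.
move=> ngrad0 k x xX.
have ix_lt : (index x X < size X)%N by rewrite index_mem.
have := congr1 (fun v : 'rV[R]_(size X * n) =>
  v 0 (mxvec_index (Ordinal ix_lt) k)) ngrad0.
by rewrite /ngrad mxvecE !mxE /= nth_index.
Qed.

Theorem proposition4 (R : realType) (n : nat) (X : seq 'rV[R]_n)
    (O : {fset 'X_{1..n}}) (B : {fset {mpoly R[n]}}) :
  uniq X -> order_ideal O -> border_basis X O B ->
  forall g, g \in B -> ngrad g X != 0.
Proof.
move=> _ O_ideal [_ _ B_form _ O_free] g gB.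
have [b [c [[bO [o oO [k b_def]]] g_def]]] := B_form g gB; subst b g.
apply/eqP => /ngrad_eq0_mderiv_vanishing/(_ k).
rewrite (mpoly_fset_span (mcoeff_mderiv_border_notin O_ideal oO)).
move=> /O_free/(_ o oO).
rewrite mcoeff_mderiv_border //.
by move/eqP; rewrite pnatr_eq0.
Qed.
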